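(* Let $f\colon [0,1]^2\to\mathbb{R}$ be a continuous function which is monotone, i.e. for every $t\in\mathbb{R}$ the level set $\{x\in[0,1]^2 : f(x)=t\}$ is connected. Let $S$ be the critical set of $f$ and $E^*$ the set defined in the context. Then $f$ has the relaxed Sard property, i.e. $f_\#(\mathbf{1}_S\mathcal{L}^2)\perp\mathcal{L}^1$, if and only if $f$ has the weak Sard property, i.e. $f_\#(\mathbf{1}_{S\cap E^*}\mathcal{L}^2)\perp\mathcal{L}^1$.
   Context: $\mathcal{L}^d$ denotes Lebesgue measure on $\mathbb{R}^d$, $\mathcal{H}^1$ the one-dimensional Hausdorff measure, $\mathbf{1}_A$ the indicator function of $A$, $f_\#\mu$ the pushforward (image) of a measure $\mu$ under $f$, and $\mu\perp\nu$ means $\mu$ and $\nu$ are mutually singular. The critical set $S$ of $f$ is the set of all points $x\in[0,1]^2$ at which $f$ is either not differentiable or has $\nabla f(x)=0$. For $t\in\mathbb{R}$ let $E_t=f^{-1}(t)$ and let $E_t^*$ be the union of all connected components of $E_t$ with strictly positive $\mathcal{H}^1$-measure; $E^*:=\bigcup_{t\in\mathbb{R}}E_t^*$ (a Borel set since $f$ is continuous). *)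

From HB Require Import structures.
From mathcomp Require Import all_boot all_order all_algebra.
From mathcomp Require Import all_classical all_reals all_analysis.
Set Implicit Arguments.
Unset Strict Implicit.
Unset Printing Implicit Defensive.
Import Order.TTheory GRing.Theory Num.Theory.
Import numFieldNormedType.Exports.
Local Open Scope classical_set_scope.
Local Open Scope ring_scope.

Section Defs.
Variable R : realType.
Implicit Types (A C : set (R * R)) (f : R * R -> R).

Definition square : set (R * R) :=
  [set p | (0 <= p.1 <= 1) /\ (0 <= p.2 <= 1)].

Definition leb2 : set (R * R) -> \bar R :=
  ((@lebesgue_measure R) \x (@lebesgue_measure R))%E.

Definition edist (p q : R * R) : R :=
  Num.sqrt ((p.1 - q.1) ^+ 2 + (p.2 - q.2) ^+ 2).

(** Euclidean diameter (0 for the empty set, +oo for unbounded sets). *)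
Definition ediam C : \bar R :=
  ereal_sup ([set 0%E] `|` [set (edist p q)%:E | p in C & q in C]).

Definition hausdorff1_delta (delta : R) A : \bar R :=
  ereal_inf [set (\sum_(0 <= i <oo) ediam (Cs i))%E |
             Cs in [set Cs : nat -> set (R * R) |
                    A `<=` \bigcup_i Cs i /\
                    forall i, (ediam (Cs i) <= delta%:E)%E]].

Definition hausdorff1 A : \bar R :=
  ereal_sup [set hausdorff1_delta delta A | delta in [set d : R | 0 < d]].

Definition monotone_fun f : Prop :=
  forall t : R, connected [set x | square x /\ f x = t].

Definition critical_set f : set (R * R) :=
  [set x | square x /\
           (~ differentiable f x \/ ('d f x : R * R -> R) = (fun=> 0))].

Definition level_set f (t : R) : set (R * R) := [set x | square x /\ f x = t].

Definition level_set_star f (t : R) : set (R * R) :=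
  \bigcup_(x in [set x | level_set f t x /\
                   (0 < hausdorff1 (connected_component (level_set f t) x))%E])
     connected_component (level_set f t) x.

Definition E_star f : set (R * R) := \bigcup_(t in [set: R]) level_set_star f t.

(** The pushforward f_#(1_A L^2) is singular w.r.t. L^1: there is a Borel
    set N with L^1(N) = 0 carrying the whole measure, i.e.
    (f_#(1_A L^2))(R \ N) = L^2(A ∩ f^{-1}(R \ N)) = 0. *)
Definition pushforward_restr_singular f (A : set (R * R)) : Prop :=
  exists N : set R, [/\ measurable N, (@lebesgue_measure R) N = 0%E &
                        leb2 (A `&` f @^-1` (~` N)) = 0%E].

Definition relaxed_sard f : Prop := pushforward_restr_singular f (critical_set f).
Definition weak_sard f : Prop :=
  pushforward_restr_singular f (critical_set f `&` E_star f).

End Defs.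

From Pilot Require Import Defs.
From HB Require Import structures.
From mathcomp Require Import all_boot all_order all_algebra.
From mathcomp Require Import all_classical all_reals all_analysis.
From mathcomp Require Import lra.
Set Implicit Arguments.
Unset Strict Implicit.
Unset Printing Implicit Defensive.
Import Order.TTheory GRing.Theory Num.Theory.
Import numFieldNormedType.Exports.
Local Open Scope classical_set_scope.
Local Open Scope ring_scope.

(** If x lies in the square but not in E^*, the level set through x is
    connected, and a connected set with two distinct points has positive H^1
    (its projection to a coordinate axis is a nondegenerate interval, and
    projections do not increase diameters); so that level set is {x}.  A
    continuous function whose level set at x is {x} has a constant sign on
    (square minus x), since any two such points are joined by horizontal and
    vertical segments avoiding x; so x is the strict global minimum or maximum
    of f.  Hence S \ E^* has at most two points, its vertical sections are
    Lebesgue-null, and the restrictions of L^2 to S and to S ∩ E^* have the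
    same null pushforward sets. *)

Lemma lee_double (R : realDomainType) (x y : \bar R) :
  (x + x <= y + y)%E -> (x <= y)%E.
Proof. by apply: contraTT; rewrite -!ltNge => yx; exact: lteD. Qed.

Section lebesgue_outer_measure.
Variable R : realType.
Local Notation lam := (@lebesgue_measure R).

(* [lebesgue_measure] is the outer measure [mu_ext] on every set, measurable or not. *)
Lemma le_lebesgue_measure (A B : set R) : A `<=` B -> (lam A <= lam B)%E.
Proof. exact: (le_mu_ext (wlength idfun)). Qed.

Lemma lebesgue_measure_sigma_subadditive (F : nat -> set R) :
  (lam (\bigcup_n F n) <= \sum_(0 <= i <oo) lam (F i))%E.
Proof. exact: (mu_ext_sigma_subadditive (measure_ge0 (wlength idfun))). Qed.

Lemma lebesgue_measureU_null (A B : set R) :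
  lam B = 0%E -> (lam (A `|` B) <= lam A)%E.
Proof.
have lamU2 : (lam (A `|` B) <= lam A + lam B)%E.
  exact: (outer_measureU2 (mu_ext (wlength idfun))).
by move=> B0; rewrite B0 adde0 in lamU2.
Qed.

Lemma lebesgue_measure_subset1 (A : set R) : is_subset1 A -> lam A = 0%E.
Proof.
move=> A1; have [[a Aa]|/set0P/negP/negPn/eqP ->] := pselect (A !=set0);
  last exact: measure0.
apply/eqP; rewrite eq_le measure_ge0 andbT -(lebesgue_measure_set1 a).
by apply: le_lebesgue_measure => x Ax; exact: A1.
Qed.

End lebesgue_outer_measure.

Section leb2.
Variable R : realType.
Local Notation lam := (@lebesgue_measure R).

Lemma leb2_ge0 (A : set (R * R)) : (0 <= leb2 A)%E.
Proof. by apply: integral_ge0 => x _; exact: measure_ge0. Qed.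

(* No measurability is needed: a nonnegative integral is a supremum over the
   simple functions below the integrand. *)
Lemma leb2_le_xsection (A B : set (R * R)) :
  (forall a, (lam (xsection A a) <= lam (xsection B a))%E) ->
  (leb2 A <= leb2 B)%E.
Proof.
move=> AB; rewrite /leb2 /= /product_measure1 /=.
rewrite !ge0_integralE => [|x _|x _]; do ?exact: measure_ge0.
apply: ereal_sup_le => _ [h hA <-]; exists h => // x.
by apply: le_trans (hA x) _; rewrite /patch; case: ifP.
Qed.

Lemma lebesgue_xsection_subset1 (P : set (R * R)) a :
  is_subset1 P -> lam (xsection P a) = 0%E.
Proof.
move=> P1; apply: lebesgue_measure_subset1 => y z /xsectionP Py /xsectionP Pz.
by case: (P1 _ _ Py Pz).
Qed.

Lemma lebesgue_xsectionU_subset1 (P Q : set (R * R)) a :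
  is_subset1 P -> is_subset1 Q -> lam (xsection (P `|` Q) a) = 0%E.
Proof.
move=> P1 Q1; apply/eqP; rewrite eq_le measure_ge0 andbT.
rewrite xsectionE preimage_setU -!xsectionE.
apply: le_trans (lebesgue_measureU_null _ (lebesgue_xsection_subset1 a Q1)) _.
by rewrite lebesgue_xsection_subset1.
Qed.

Lemma pushforward_restr_singular_subset (f : R * R -> R) (A B P : set (R * R)) :
  A `<=` B `|` P -> (forall a, lam (xsection P a) = 0%E) ->
  pushforward_restr_singular f B -> pushforward_restr_singular f A.
Proof.
move=> ABP P0 [N [mN N0 BN0]]; exists N; split => //.
apply/eqP; rewrite eq_le leb2_ge0 andbT -BN0; apply: leb2_le_xsection => a.
apply: le_trans (lebesgue_measureU_null _ (P0 a)).
apply: le_lebesgue_measure => y /xsectionP [/ABP[By|Py] Ny].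
  by left; apply/xsectionP.
by right; apply/xsectionP.
Qed.

End leb2.

Section hausdorff1.
Variable R : realType.
Local Notation lam := (@lebesgue_measure R).
Implicit Types (C D : set (R * R)) (u v : R * R).

Lemma ediam_ge0 C : (0 <= ediam C)%E.
Proof. by apply: ereal_sup_ubound; left. Qed.

Lemma edist_le_ediam C u v : C u -> C v -> ((Defs.edist u v)%:E <= ediam C)%E.
Proof. by move=> Cu Cv; apply: ereal_sup_ubound; right; exists u => //; exists v. Qed.

Lemma dist_fst_le_edist u v : `|u.1 - v.1| <= Defs.edist u v.
Proof.
rewrite /Defs.edist -sqrtr_sqr ler_sqrt; last by rewrite addr_ge0 // sqr_ge0.
by rewrite lerDl sqr_ge0.
Qed.

Lemma dist_snd_le_edist u v : `|u.2 - v.2| <= Defs.edist u v.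
Proof.
rewrite /Defs.edist -sqrtr_sqr ler_sqrt; last by rewrite addr_ge0 // sqr_ge0.
by rewrite lerDr sqr_ge0.
Qed.

Lemma lebesgue_lipschitz_image_le (pi : R * R -> R) D :
  (forall u v, `|pi u - pi v| <= Defs.edist u v) ->
  (lam (pi @` D) <= ediam D + ediam D)%E.
Proof.
move=> pi1.
have [[d Dd]|/set0P/negP/negPn/eqP ->] := pselect (D !=set0); last first.
  by rewrite image_set0 measure0 adde_ge0 // ediam_ge0.
case Ed: (ediam D) (ediam_ge0 D) => [r| |] //; last by move=> _; exact: leey.
rewrite lee_fin => r0.
have piD : pi @` D `<=` `[pi d - r, pi d + r].
  move=> _ [y Dy <-]; rewrite /= in_itv /=.
  have : `|pi y - pi d| <= r.
    by apply: le_trans (pi1 y d) _; rewrite -lee_fin -Ed; exact: edist_le_ediam.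
  by rewrite ler_norml => /andP[? ?]; apply/andP; split; lra.
apply: le_trans (le_lebesgue_measure piD) _.
by rewrite lebesgue_measure_itv /=; case: ifP => _; rewrite -?EFinD lee_fin; lra.
Qed.

Lemma hausdorff1_gt0_lipschitz (pi : R * R -> R) C a b :
  continuous pi -> (forall u v, `|pi u - pi v| <= Defs.edist u v) ->
  connected C -> C a -> C b -> pi a < pi b -> (0 < hausdorff1 C)%E.
Proof.
move=> pic pi1 cC Ca Cb ab.
have itv_sub : `[pi a, pi b] `<=` pi @` C.
  have /connected_intervalP piC : connected (pi @` C).
    by apply: connected_continuous_connected => //; exact: continuous_subspaceT.
  move=> z; rewrite /= in_itv /= => hz.
  by apply: (piC (pi a) (pi b)); [exists a|exists b|].
apply: (@lt_le_trans _ _ ((pi b - pi a) / 2)%:E).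
  by rewrite lte_fin divr_gt0 // subr_gt0.
apply: (@le_trans _ _ (hausdorff1_delta 1 C)); last first.
  by apply: ereal_sup_ubound; exists 1 => //; exact: ltr01.
apply: le_ereal_inf_tmp => _ [Cs [CCs _] <-]; apply: lee_double.
rewrite -EFinD -splitr -nneseriesD => [|i _ _|i _ _]; last 2 first.
- exact: ediam_ge0.
- exact: ediam_ge0.
have -> : (pi b - pi a)%:E = lam `[pi a, pi b].
  by rewrite lebesgue_measure_itv /= lte_fin ab -EFinD.
apply: le_trans (le_lebesgue_measure itv_sub) _.
apply: le_trans (le_lebesgue_measure (B := \bigcup_i (pi @` Cs i)) _) _.
  by move=> _ [c Cc <-]; have [i _ Ci] := CCs c Cc; exists i => //; exists c.
apply: le_trans (lebesgue_measure_sigma_subadditive _) _.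
apply: lee_nneseries => [i _ _|i _]; first exact: measure_ge0.
exact: lebesgue_lipschitz_image_le.
Qed.

Lemma fst_continuous : continuous (@fst R R).
Proof. by move=> p; exact: cvg_fst. Qed.

Lemma snd_continuous : continuous (@snd R R).
Proof. by move=> p; exact: cvg_snd. Qed.

Lemma hausdorff1_connected_gt0 C u v :
  connected C -> C u -> C v -> u <> v -> (0 < hausdorff1 C)%E.
Proof.
move=> cC Cu Cv uv.
have fst_gt0 := hausdorff1_gt0_lipschitz fst_continuous dist_fst_le_edist cC.
have snd_gt0 := hausdorff1_gt0_lipschitz snd_continuous dist_snd_le_edist cC.
have [lt1|gt1|e1] := ltgtP u.1 v.1; first exact: fst_gt0 Cu Cv lt1.
  exact: fst_gt0 Cv Cu gt1.
have [lt2|gt2|e2] := ltgtP u.2 v.2; first exact: snd_gt0 Cu Cv lt2.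
  exact: snd_gt0 Cv Cu gt2.
by case: uv; move: u v e1 e2 {Cu Cv} => [? ?] [? ?] /= -> ->.
Qed.

End hausdorff1.

Lemma level_set_eq_set1 (R : realType) (f : R * R -> R) x :
  monotone_fun f -> square x -> ~ E_star f x -> level_set f (f x) = [set x].
Proof.
move=> fm sx nEx; apply/seteqP; split => [z [sz fz]|_ ->]; last by split.
apply: contrapT => zx; apply: nEx.
have cL : connected (level_set f (f x)) := fm (f x).
have Lx : level_set f (f x) x by split.
exists (f x) => //; exists x; last by rewrite (connected_component_id Lx cL).
split => //; rewrite (connected_component_id Lx cL).
by apply: (hausdorff1_connected_gt0 cL (_ : level_set f (f x) z) Lx).
Qed.

Lemma connected_sign_constant (T : topologicalType) (R : realType)
    (K : set T) (g : T -> R) (t : R) :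
  connected K -> {within K, continuous g} -> (forall z, K z -> g z != t) ->
  forall y z, K y -> K z -> (g y < t) = (g z < t).
Proof.
move=> cK gc gt.
have /connected_intervalP gK := connected_continuous_connected cK gc.
suff lt_t y z : K y -> K z -> g y < t -> g z < t.
  by move=> y z Ky Kz; apply/idP/idP; exact: lt_t.
move=> Ky Kz gy; rewrite ltNge le_eqVlt eq_sym (negbTE (gt z Kz)) /=.
apply/negP => tz.
have [w Kw gw] : (g @` K) t.
  by apply: (gK (g y) (g z)); [exists y|exists z|rewrite (ltW gy) (ltW tz)].
by move: (gt w Kw); rewrite gw eqxx.
Qed.

Definition strict_argmin (T : Type) (R : realType) (A : set T) (g : T -> R) : set T :=
  [set x | A x /\ forall y, A y -> y <> x -> g x < g y].

Lemma strict_argmin_subset1 (T : Type) (R : realType) (A : set T) (g : T -> R) :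
  is_subset1 (strict_argmin A g).
Proof.
move=> x y [Ax xmin] [Ay ymin]; apply: contrapT => xy.
by have := lt_trans (xmin y Ay (nesym xy)) (ymin x Ax xy); rewrite ltxx.
Qed.

Lemma exists_unit_itv_neq (R : realType) (c : R) : exists2 r : R, 0 <= r <= 1 & r != c.
Proof.
have [->|c0] := eqVneq c 0; first by exists 1; rewrite ?oner_eq0 ?lexx ?ler01.
by exists 0; rewrite ?lexx ?ler01 // eq_sym.
Qed.

Lemma connected_unit_itv_image (R : realType) (T : topologicalType) (g : R -> T) :
  continuous g -> connected (g @` `[0, 1]).
Proof.
move=> gc; apply: connected_continuous_connected; last exact: continuous_subspaceT.
by apply/connected_intervalP; exact: interval_is_interval.
Qed.

Section strict_extremum.
Variables (R : realType) (f : R * R -> R) (x1 x2 : R).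
Hypothesis fc : {within @square R, continuous f}.
Hypothesis level_x : level_set f (f (x1, x2)) = [set (x1, x2)].
Local Notation t := (f (x1, x2)).

Let unit_itvP (s : R) : `[0, 1]%classic s <-> 0 <= s <= 1.
Proof. by rewrite /= in_itv. Qed.

Lemma level_set1_neq y : square y -> y <> (x1, x2) -> f y != t.
Proof.
move=> sy yx; apply/eqP => fy; apply: yx.
by have : level_set f t y by []; rewrite level_x.
Qed.

Lemma sign_constant_off_point (K : set (R * R)) :
  connected K -> K `<=` @square R -> ~ K (x1, x2) ->
  forall y z, K y -> K z -> (f y < t) = (f z < t).
Proof.
move=> cK Ksq Kx; apply: connected_sign_constant => //.
  exact: continuous_subspaceW fc.
by move=> z Kz; apply: level_set1_neq (Ksq z Kz) _ => zx; apply: Kx; rewrite -zx.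
Qed.

Lemma sign_constant_hsegment c : 0 <= c <= 1 -> c != x2 ->
  forall s s', 0 <= s <= 1 -> 0 <= s' <= 1 -> (f (s, c) < t) = (f (s', c) < t).
Proof.
move=> c01 cx2 s s' /unit_itvP s01 /unit_itvP s'01.
apply: (@sign_constant_off_point ((fun s => (s, c)) @` `[0, 1])).
- exact/connected_unit_itv_image/(fun s => cvg_pair cvg_id (cvg_cst c)).
- by move=> _ [r /unit_itvP r01 <-]; split.
- by case=> ? _ [_ cx]; rewrite cx eqxx in cx2.
- by exists s.
- by exists s'.
Qed.

Lemma sign_constant_vsegment c : 0 <= c <= 1 -> c != x1 ->
  forall s s', 0 <= s <= 1 -> 0 <= s' <= 1 -> (f (c, s) < t) = (f (c, s') < t).
Proof.
move=> c01 cx1 s s' /unit_itvP s01 /unit_itvP s'01.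
apply: (@sign_constant_off_point ((fun s => (c, s)) @` `[0, 1])).
- exact/connected_unit_itv_image/(fun s => cvg_pair (cvg_cst c) cvg_id).
- by move=> _ [r /unit_itvP r01 <-]; split.
- by case=> ? _ [cx _]; rewrite cx eqxx in cx1.
- by exists s.
- by exists s'.
Qed.

(* Any point y of the square other than x is joined to the reference point (c, r)
   by a vertical and a horizontal segment avoiding x. *)
Lemma sign_constant_square_off_point :
  exists z, forall y, square y -> y <> (x1, x2) -> (f y < t) = (f z < t).
Proof.
have [r r01 rx2] := exists_unit_itv_neq x2.
have [c c01 cx1] := exists_unit_itv_neq x1.
exists (c, r) => -[y1 y2] [/= y101 y201] yx; have [e1|n1] := eqVneq y1 x1.
  have n2 : y2 != x2 by apply: contra_notN yx => /eqP ->; rewrite e1.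
  rewrite (sign_constant_hsegment y201 n2 y101 c01).
  exact: sign_constant_vsegment.
rewrite (sign_constant_vsegment y101 n1 y201 r01).
exact: sign_constant_hsegment.
Qed.

Lemma strict_extremum_of_level_set1 :
  strict_argmin (@square R) f (x1, x2) \/
  strict_argmin (@square R) (fun y => - f y) (x1, x2).
Proof.
have [sx _] : level_set f t (x1, x2) by rewrite level_x.
have [z same_sign] := sign_constant_square_off_point.
have [lt0|ge0] := boolP (f z < t); [right|left]; split=> // y sy yx.
  by rewrite ltrN2 same_sign.
by rewrite lt_def (level_set1_neq sy yx) leNgt same_sign.
Qed.

End strict_extremum.

Theorem theorem1 (R : realType) (f : R * R -> R) :
  {within @square R, continuous f} ->
  monotone_fun f ->
  (relaxed_sard f <-> weak_sard f).
Proof.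
move=> fc fm; split.
  apply: (pushforward_restr_singular_subset (P := set0)) => [x [Sx _]|a].
    by left.
  by rewrite xsection0 measure0.
apply: (pushforward_restr_singular_subset
  (P := strict_argmin (@square R) f `|` strict_argmin (@square R) (fun y => - f y)))
  => [x Sx|a].
  have [Ex|nEx] := pselect (E_star f x); [by left | right].
  case: x Sx nEx => x1 x2 [sx _] nEx.
  exact: (strict_extremum_of_level_set1 fc (level_set_eq_set1 fm sx nEx)).
by apply: lebesgue_xsectionU_subset1; exact: strict_argmin_subset1.
Qed.
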